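(* Let $\ell,n$ be positive integers with $2^\ell\le n$. If $A\subseteq\mathbb{Z}_{2^n}$ has size $|A|>\left(1-\frac{1}{2^\ell-1}\right)2^n$, then there exists $x\in\mathbb{Z}_{2^n}$ such that $\{x,2x,3x,\dots,(2^\ell-1)x\}\subseteq A$.
   Context: Arithmetic is in $\mathbb{Z}_{2^n}$. *)

From mathcomp Require Import all_boot all_order all_algebra.
Set Implicit Arguments. Unset Strict Implicit. Unset Printing Implicit Defensive.

(* Induction on n, with B the complement of A, so that (2^l - 1)|B| < 2^n.
   Call x good if no kx with 0 < k < 2^l lies in B.  Multiplication by an odd
   number permutes the odd residues, so summing over the odd x the number of
   such k with kx in B gives 2^(l-1) L, where L counts the elements of B of
   2-adic valuation below l.  If no odd x is good, that sum is at least
   2^(n-1), hence L >= 2^(n-l); the multiples of 2^l in B, read as a subset of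
   Z_(2^(n-l)), then satisfy the hypothesis again, and a good x there yields
   the good element 2^l x.  When n < l, B is empty and x = 0 is good. *)

From mathcomp Require Import all_boot all_order all_algebra.
From mathcomp Require Import zify ring lra.
Import Order.TTheory GRing.Theory Num.Theory.

Implicit Types (B : pred nat).

Definition hits (n l : nat) (B : pred nat) (x : nat) : nat :=
  \sum_(k < 2 ^ l) ((0 < k) && B ((k * x) %% 2 ^ n)).

Definition count_val2 (n : nat) (B : pred nat) (a : nat) : nat :=
  \sum_(r < 2 ^ (n - a)) (odd r && B (2 ^ a * r)).

Lemma sum_ord_double (F : nat -> nat) N :
  \sum_(i < 2 * N) F i = \sum_(i < N) (F (2 * i) + F (2 * i).+1).
Proof.
elim: N => [|N IH]; first by rewrite muln0 !big_ord0.
by rewrite mulnSr addn2 !big_ord_recr /= IH addnA.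
Qed.

Lemma sum_odd_ord_double N : \sum_(x < 2 * N) odd x = N.
Proof.
rewrite (sum_ord_double (fun x => nat_of_bool (odd x))).
rewrite (eq_bigr (fun _ => 1)) => [|i _]; last by rewrite oddS oddM.
by rewrite sum_nat_const card_ord muln1.
Qed.

Lemma sum_odd_modn_double (h : nat -> nat) N : ~~ odd N ->
  \sum_(x < 2 * N) odd x * h (x %% N) = 2 * \sum_(x < N) odd x * h x.
Proof.
move=> evenN; rewrite mul2n -addnn big_split_ord mul2n -addnn /=.
congr (_ + _); apply: eq_bigr => i _; first by rewrite modn_small.
by rewrite modnDl modn_small // oddD (negbTE evenN).
Qed.

Lemma eqn_modn_mul2l_coprime m k x y : coprime m k ->
  (k * x == k * y %[mod m]) = (x == y %[mod m]).
Proof.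
move=> cop_mk; wlog le_yx : x y / y <= x.
  move=> IH; case: (leqP y x) => [|/ltnW le_xy]; first exact: IH.
  by rewrite eq_sym [RHS]eq_sym IH.
by rewrite !eqn_mod_dvd ?leq_mul2l ?le_yx ?orbT // -mulnBr Gauss_dvdr.
Qed.

Lemma sum_odd_mulr_odd n k (h : nat -> nat) : 0 < n -> odd k ->
  \sum_(x < 2 ^ n) odd x * h ((k * x) %% 2 ^ n) = \sum_(x < 2 ^ n) odd x * h x.
Proof.
move=> n_gt0 odd_k.
have pow_gt0 : 0 < 2 ^ n by rewrite expn_gt0.
pose mulk (x : 'I_(2 ^ n)) : 'I_(2 ^ n) := Ordinal (ltn_pmod (k * x) pow_gt0).
have mulk_inj : injective mulk.
  move=> x y /(congr1 val) /= /eqP.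
  rewrite eqn_modn_mul2l_coprime ?coprime_pexpl ?coprime2n //.
  by rewrite !modn_small // => /eqP /val_inj.
rewrite [RHS](reindex_inj mulk_inj) /=; apply: eq_bigr => x _.
by rewrite odd_mod ?oddX ?eqn0Ngt ?n_gt0 // oddM odd_k.
Qed.

Lemma hits0 n B x : hits n 0 B x = 0.
Proof. by rewrite /hits big_ord1. Qed.

Lemma hitsS n l B x : hits n.+1 l.+1 B x =
  hits n l (fun w => B (2 * w)) (x %% 2 ^ n) +
  \sum_(k < 2 ^ l) B (((2 * k).+1 * x) %% 2 ^ n.+1).
Proof.
rewrite /hits expnS.
rewrite (sum_ord_double (fun k => (0 < k) && B ((k * x) %% 2 ^ n.+1))).
rewrite big_split /=; congr (_ + _).
apply: eq_bigr => k _; rewrite muln_gt0 /= expnS -mulnA -muln_modr.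
by rewrite modnMmr.
Qed.

Lemma count_val2S n B a :
  count_val2 n.+1 B a.+1 = count_val2 n (fun w => B (2 * w)) a.
Proof.
by rewrite /count_val2 subSS; apply: eq_bigr => r _; rewrite expnS mulnA.
Qed.

Lemma sum_odd_hits_odd n l B : 0 < n ->
  \sum_(x < 2 ^ n) odd x * \sum_(k < 2 ^ l) B (((2 * k).+1 * x) %% 2 ^ n) =
  2 ^ l * count_val2 n B 0.
Proof.
move=> n_gt0; under eq_bigr do rewrite big_distrr.
rewrite exchange_big (eq_bigr (fun=> \sum_(x < 2 ^ n) odd x * B x)) => [|k _].
  rewrite sum_nat_const card_ord /count_val2 subn0; congr (_ * _).
  by apply: eq_bigr => x _; rewrite mul1n mulnb.
by rewrite (@sum_odd_mulr_odd _ _ (fun y => nat_of_bool (B y))) // oddS oddM.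
Qed.

Lemma sum_odd_hits n l B : l <= n ->
  2 * \sum_(x < 2 ^ n) odd x * hits n l B x =
  2 ^ l * \sum_(a < l) count_val2 n B a.
Proof.
elim: l n B => [|l IH] n B le_ln.
  by rewrite big_ord0 muln0 big1 ?muln0 // => x _; rewrite hits0 muln0.
case: n le_ln => // n le_ln.
under eq_bigr do rewrite hitsS mulnDr.
rewrite big_split /= big_ord_recl !mulnDr sum_odd_hits_odd // [RHS]addnC.
rewrite mulnA -expnS; congr (_ + _); case: l IH le_ln => [|l] IH le_ln.
  by rewrite big_ord0 big1 ?muln0 // => x _; rewrite hits0 muln0.
rewrite expnS sum_odd_modn_double ?oddX; last by case: (n) le_ln.
rewrite IH // [in RHS]expnS -mulnA; congr (2 * (_ * _)).
by apply: eq_bigr => a _; rewrite count_val2S.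
Qed.

Lemma sum_count_val2 n l B : l <= n ->
  \sum_(y < 2 ^ n) B y =
  \sum_(a < l) count_val2 n B a + \sum_(y < 2 ^ (n - l)) B (2 ^ l * y).
Proof.
elim: l => [|l IH] le_ln.
  by rewrite big_ord0 subn0; apply: eq_bigr => y _; rewrite mul1n.
rewrite IH 1?ltnW // big_ord_recr -addnA /=; congr (_ + _).
rewrite /count_val2 -(subnSK le_ln) expnS.
rewrite (sum_ord_double (fun y => B (2 ^ l * y) : nat)).
rewrite (sum_ord_double (fun r => odd r && B (2 ^ l * r) : nat)) -big_split.
by apply: eq_bigr => y _; rewrite oddS !oddM /= add0n addnC mulnA -expnSr.
Qed.

Lemma hits_mull n l B x : l <= n ->
  hits n l B (2 ^ l * x) = hits (n - l) l (fun w => B (2 ^ l * w)) x.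
Proof.
move=> le_ln; apply: eq_bigr => k _; congr (_ && B _).
by rewrite -{1}(subnKC le_ln) expnD mulnCA -muln_modr.
Qed.

Lemma hits_eq0P n l B x :
  reflect (forall k, 0 < k < 2 ^ l -> ~~ B ((k * x) %% 2 ^ n))
          (hits n l B x == 0).
Proof.
rewrite sum_nat_eq0; apply: (iffP forallP) => [hx k /andP [k_gt0 lt_k] | hx k].
  by move: (hx (Ordinal lt_k)); rewrite /= k_gt0 eqn0Ngt lt0b.
rewrite /= eqn0Ngt lt0b negb_and -implybE; apply/implyP=> k_gt0.
by apply: hx; rewrite k_gt0 ltn_ord.
Qed.

Lemma count_low_val2 n l B : 0 < l <= n ->
  (forall x : 'I_(2 ^ n), odd x -> 0 < hits n l B x) ->
  2 ^ (n - l) <= \sum_(a < l) count_val2 n B a.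
Proof.
case/andP=> l_gt0 le_ln hits_gt0.
have pow_n : 2 ^ n = 2 * 2 ^ (n - 1).
  by rewrite -expnS subn1 prednK // (leq_trans l_gt0).
rewrite -(@leq_pmul2l (2 ^ l)) ?expn_gt0 // -expnD subnKC // -sum_odd_hits //.
rewrite {1}pow_n leq_mul2l -{1}(sum_odd_ord_double (2 ^ (n - 1))) -pow_n /=.
by apply: leq_sum => x _; case: (boolP (odd x)) => [/hits_gt0|]; rewrite ?mul1n.
Qed.

Lemma exists_hits_eq0 [l n B] : 0 < l ->
  (2 ^ l - 1) * \sum_(y < 2 ^ n) B y < 2 ^ n -> exists x, hits n l B x = 0.
Proof.
move=> l_gt0; elim/ltn_ind: n B => n IHn B small_B.
case: (ltnP n l) => [lt_nl | le_ln].
  have pow_gt0 : 0 < 2 ^ n by rewrite expn_gt0.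
  have B0_le : B 0 <= \sum_(y < 2 ^ n) B y.
    by rewrite (bigD1 (Ordinal pow_gt0)) ?leq_addr.
  exists 0; apply/eqP/hits_eq0P => k _; rewrite muln0 mod0n.
  apply/negP=> B0; rewrite B0 in B0_le.
  have : 2 ^ n < 2 ^ l by rewrite ltn_exp2l.
  nia.
case: (boolP [exists x : 'I_(2 ^ n), odd x && (hits n l B x == 0)]).
  by case/existsP=> x /andP [_ /eqP hx]; exists x.
move/existsPn=> no_odd_root.
have low : 2 ^ (n - l) <= \sum_(a < l) count_val2 n B a.
  apply: count_low_val2 => [|x odd_x]; first by rewrite l_gt0.
  by rewrite lt0n; move: (no_odd_root x); rewrite odd_x.
have pow_n : 2 ^ n = 2 ^ l * 2 ^ (n - l) by rewrite -expnD subnKC.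
move: low small_B; rewrite (@sum_count_val2 _ _ B le_ln) pow_n.
set L := \sum_(a < l) _; set C := \sum_(y < _) _; set P := 2 ^ (n - l).
move=> low small_B; have small_C : (2 ^ l - 1) * C < P by nia.
have [|x hx] := IHn (n - l) _ (fun w => B (2 ^ l * w)) small_C; first lia.
by exists (2 ^ l * x); rewrite hits_mull.
Qed.

Lemma mul_card_compl_lt (R : realFieldType) m c d : 0 < m ->
  ((1 - 1 / m%:R) * (c + d)%:R < c%:R :> R)%R -> m * d < c + d.
Proof.
move=> m_gt0 large_c; rewrite -(ltr_nat R) natrM natrD.
have m_neq0 : (m%:R != 0 :> R)%R by rewrite pnatr_eq0 -lt0n.
have : ((m%:R - 1) * (c + d)%:R < m%:R * c%:R :> R)%R.
  have -> : ((m%:R - 1) * (c + d)%:R =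
             m%:R * ((1 - 1 / m%:R) * (c + d)%:R) :> R)%R by field.
  by rewrite ltr_pM2l ?ltr0n.
rewrite natrD; nra.
Qed.

Theorem claim2p2 (l n : nat) (hl : (0 < l)%N) (hn : (0 < n)%N)
    (hln : (2 ^ l <= n)%N) (A : {set 'Z_(2 ^ n)})
    (hA : ((1 - 1 / ((2 ^ l - 1)%N)%:R) * ((2 ^ n)%N)%:R < (#|A|)%:R :> rat)%R) :
  exists x : 'Z_(2 ^ n), forall k : nat, (1 <= k <= 2 ^ l - 1)%N -> (x *+ k)%R \in A.
Proof.
have pow_gt1 : 1 < 2 ^ n by rewrite -{1}(expn0 2) ltn_exp2l.
have card_A : #|A| + #|~: A| = 2 ^ n by rewrite cardsC card_ord Zp_cast.
pose B y := (inZp y : 'Z_(2 ^ n)) \notin A.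
have sum_B : \sum_(y < 2 ^ n) B y = #|~: A|.
  rewrite -sum1_card [RHS]big_mkcond /= -[in LHS](Zp_cast pow_gt1).
  by apply: eq_bigr => y _; rewrite /B valZpK in_setC; case: (y \in A).
have small_B : (2 ^ l - 1) * \sum_(y < 2 ^ n) B y < 2 ^ n.
  rewrite sum_B -[X in _ < X]card_A; apply: (@mul_card_compl_lt rat).
    by rewrite subn_gt0 -{1}(expn0 2) ltn_exp2l.
  by rewrite card_A.
have [x /eqP /hits_eq0P avoid_B] := exists_hits_eq0 hl small_B.
exists (inZp x) => k /andP [k_gt0 le_k].
have -> : ((inZp x : 'Z_(2 ^ n)) *+ k)%R = inZp ((k * x) %% 2 ^ n).
  by apply: val_inj; rewrite Zp_mulrn /= Zp_cast // modnMml mulnC modn_mod.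
by apply/negPn/avoid_B; rewrite k_gt0; lia.
Qed.
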